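(* Let $G$ be a finite abelian group with $|G|\ge4$, $\sigma$ an automorphism of $G$ of order two, and $S$ a symmetric subset of $G$ of size $d$. Let $X$ be one of the Cayley sum graph $C_\Sigma(G,S)$, the twisted Cayley graph $C(G,S)^\sigma$, or the twisted Cayley sum graph $C_\Sigma(G,S)^\sigma$, and suppose $X$ is undirected. Then the diameter of $X$ is at least $\frac{|S|}{4e}|G|^{1/|S|}-\frac12|S|$.
   Context: $C_\Sigma(G,S)$ has vertex set $G$ and an edge from $x$ to $x^{-1}s$ for each $s\in S$; $C(G,S)^\sigma$ has an edge from $x$ to $\sigma(xs)$; $C_\Sigma(G,S)^\sigma$ has an edge from $x$ to $\sigma(x^{-1}s)$. A graph is undirected if its adjacency matrix is symmetric. The diameter is the supremum over pairs of vertices of the length of a shortest path between them (infinite if the graph is disconnected). *)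

From HB Require Import structures.
From mathcomp Require Import all_boot all_order all_algebra all_fingroup.
From mathcomp Require Import all_classical all_reals all_analysis.
Set Implicit Arguments. Unset Strict Implicit. Unset Printing Implicit Defensive.
Import Order.TTheory GRing.Theory Num.Theory.

Inductive graph_kind := CayleySum | TwistedCayley | TwistedCayleySum.

Section Graphs.
Variables (gT : finGroupType) (sigma : {perm gT}) (S : {set gT}).

Definition nbr (k : graph_kind) (x s : gT) : gT :=
  match k with
  | CayleySum => (x^-1 * s)%g
  | TwistedCayley => sigma (x * s)%g
  | TwistedCayleySum => sigma (x^-1 * s)%g
  end.

(* adjacency matrix (with multiplicities): number of s in S giving an edge x -> y *)
Definition adj (k : graph_kind) (x y : gT) : nat :=
  #|[set s in S | nbr k x s == y]|.

Definition undirected (k : graph_kind) : Prop :=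
  forall x y, adj k x y = adj k y x.

Definition edge (k : graph_kind) : rel gT := fun x y => adj k x y != 0%N.

Fixpoint walk (k : graph_kind) (n : nat) (x y : gT) : bool :=
  match n with
  | 0 => x == y
  | n'.+1 => [exists z, edge k x z && walk k n' z y]
  end.

Local Open Scope ereal_scope.
(* shortest path length (+oo if no path) *)
Definition gdist {R : realType} (k : graph_kind) (x y : gT) : \bar R :=
  ereal_inf [set (n%:R)%:E | n in [set n : nat | walk k n x y]].

Definition diameter {R : realType} (k : graph_kind) : \bar R :=
  ereal_sup [set gdist k x y | x in [set: gT] & y in [set: gT]]%classic.
End Graphs.

From HB Require Import structures.
From mathcomp Require Import all_boot all_order all_algebra all_fingroup.
From mathcomp Require Import all_classical all_reals all_analysis.
From mathcomp Require Import lra.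
Import Order.TTheory GRing.Theory Num.Theory.
Set Implicit Arguments. Unset Strict Implicit. Unset Printing Implicit Defensive.

(* Each edge has the form x -> psi x * phi s with s in S, where psi is a group
   endomorphism (inversion, which is one since G is abelian; sigma; or sigma after
   inversion) and phi maps S into S (for the twisted graphs, by undirectedness).  So a
   walk of length n from 1 ends at a product of n elements of S.  If every vertex lies
   within distance D of 1 then, G being abelian, |G| is at most the number of multisets
   of size D drawn from S and 1, that is
   C(D + |S|, D) <= (D + |S|)^|S| / |S|! <= (e (D + |S|) / |S|)^|S|.  Solving for D gives
   D >= |S|/e |G|^(1/|S|) - |S|, stronger than the bound claimed. *)

Lemma iter_morph (T : Type) (f : T -> T) (op : T -> T -> T) n :
  {morph f : x y / op x y} -> {morph iter n f : x y / op x y}.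
Proof. by move=> fM; elim: n => // n IHn x y /=; rewrite IHn fM. Qed.

Lemma mulg_morph1 (gT : finGroupType) (f : gT -> gT) :
  {morph f : x y / (x * y)%g} -> f 1%g = 1%g.
Proof. by move=> fM; apply: (mulgI (f 1%g)); rewrite -fM !mulg1. Qed.

Section AbelianProducts.
Local Open Scope group_scope.
Variable gT : finGroupType.
Hypothesis cTT : abelian [set: gT].

Lemma abelian_commute (x y : gT) : commute x y.
Proof. by apply: (centsP cTT); rewrite inE. Qed.

Lemma perm_prodg (I : eqType) (r1 r2 : seq I) (F : I -> gT) :
  perm_eq r1 r2 -> \prod_(i <- r1) F i = \prod_(i <- r2) F i.
Proof.
elim: r1 r2 => [|a r1 IHr1] r2 eq_r12.
  by case: r2 eq_r12 => [//|b r2] /perm_size.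
have a_r2 : a \in r2 by rewrite -(perm_mem eq_r12) mem_head.
move: eq_r12; case/splitPr: a_r2 => r2a r2b eq_r12.
have eq_r1 : perm_eq r1 (r2a ++ r2b).
  rewrite -(perm_cons a); apply: perm_trans eq_r12 _.
  by rewrite -[a :: r2b]cat1s -[a :: _ ++ _]cat1s perm_catCA.
rewrite big_cons (IHr1 _ eq_r1) !big_cat big_cons /= !mulgA.
by congr (_ * _); exact: abelian_commute.
Qed.

Lemma card_prod_tuples D n (e : 'I_n.+1 -> gT) :
  #|[set \prod_(i <- t) e i | t : D.-tuple 'I_n.+1]| <= 'C(D + n, D).
Proof.
rewrite -card_sorted_tuples.
apply: leq_trans (leq_imset_card (fun t : D.-tuple _ => \prod_(i <- t) e i) _).
apply/subset_leq_card/fintype.subsetP => _ /imsetP[t _ ->].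
apply/imsetP; exists (sort_tuple (relpre val leq) t).
  by rewrite inE /= -sort_map; apply/sort_sorted/leq_total.
by apply: perm_prodg; rewrite perm_sym perm_sort.
Qed.

Lemma card_le_bin_of_short_products (S : {set gT}) D :
  (forall y, exists2 l, all (mem S) l & size l <= D /\ y = \prod_(s <- l) s) ->
  #|gT| <= 'C(D + #|S|, D).
Proof.
move=> short_prod; rewrite -cardsT.
(* The last index #|S| lies past the end of enum S, so e maps it to the padding 1. *)
pose e (i : 'I_#|S|.+1) := nth 1 (enum S) i.
apply: leq_trans (card_prod_tuples D e).
apply/subset_leq_card/fintype.subsetP => y _.
have [l lS [size_l ->]] := short_prod y.
pose u : seq 'I_#|S|.+1 :=
  [seq inord (index s (enum S)) | s <- l] ++ nseq (D - size l) ord_max.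
have size_u : size u == D by rewrite size_cat size_map size_nseq subnKC.
apply/imsetP; exists (Tuple size_u) => //=.
rewrite big_cat big_map big_nseq /= {2}/e nth_default -?cardE //.
rewrite iter_mulg_1 expg1n mulg1.
apply: eq_big_seq => s /(allP lS) sS.
by rewrite /e inordK ?nth_index ?mem_enum // ltnS cardE ltnW // index_mem mem_enum.
Qed.

End AbelianProducts.

Section Graphs.
Local Open Scope group_scope.
Variables (gT : finGroupType) (sigma : {perm gT}) (S : {set gT}).

Lemma edgeP k x y :
  reflect (exists2 s, s \in S & nbr sigma k x s = y) (edge sigma S k x y).
Proof.
rewrite /edge /adj cards_eq0; apply: (iffP (set0Pn _)) => [[s]|[s sS <-]].
  by rewrite inE => /andP[sS /eqP <-]; exists s.
by exists s; rewrite inE sS eqxx.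
Qed.

Lemma undirected_edge_sym k x y :
  undirected sigma S k -> edge sigma S k x y -> edge sigma S k y x.
Proof. by rewrite /edge => ->. Qed.

Section ProductWalks.
Variables (k : graph_kind) (psi phi : gT -> gT).
Hypotheses (psiM : {morph psi : x y / x * y}) (psiS : {homo psi : s / s \in S}).
Hypotheses (phiS : {homo phi : s / s \in S}).
Hypothesis nbrE : forall x s, nbr sigma k x s = psi x * phi s.

Lemma walk_prod n x y : walk sigma S k n x y ->
  exists2 l, all (mem S) l & size l = n /\ y = iter n psi x * \prod_(s <- l) s.
Proof.
elim: n x => [|n IHn] x /=.
  by move/eqP <-; exists [::]; rewrite ?big_nil ?mulg1.
case/existsP=> z /andP[/edgeP[s sS <-] /IHn[l lS [size_l ->]]].
exists (iter n psi (phi s) :: l); first by rewrite /= lS andbT iter_in ?phiS.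
by rewrite big_cons /= size_l nbrE iter_morph // mulgA -iterSr.
Qed.

Lemma walk1_prod n y : walk sigma S k n 1 y ->
  exists2 l, all (mem S) l & size l = n /\ y = \prod_(s <- l) s.
Proof.
case/walk_prod=> l lS [size_l ->]; exists l => //; split=> //.
by rewrite iter_fix ?mul1g //; apply: mulg_morph1.
Qed.

End ProductWalks.

Hypotheses (cTT : abelian [set: gT]) (sigmaM : {morph sigma : x y / x * y}).
Hypothesis Ssym : forall s, s \in S -> s^-1 \in S.

Definition nbr_shift k : gT -> gT :=
  match k with
  | CayleySum => fun x => x^-1
  | TwistedCayley => sigma
  | TwistedCayleySum => fun x => sigma x^-1
  end.

Definition nbr_label k : gT -> gT := if k is CayleySum then id else sigma.

Lemma nbr_shiftE k x s : nbr sigma k x s = nbr_shift k x * nbr_label k s.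
Proof. by case: k => //=; rewrite sigmaM. Qed.

Lemma nbr_shiftM k : {morph nbr_shift k : x y / x * y}.
Proof.
have invM : {morph (fun x : gT => x^-1) : x y / x * y}.
  by move=> x y; rewrite invMg abelian_commute.
by case: k => x y //=; rewrite invM.
Qed.

Lemma nbr_label_stable k : undirected sigma S k -> {homo nbr_label k : s / s \in S}.
Proof.
move=> und s sS; have : edge sigma S k 1 (nbr sigma k 1 s) by apply/edgeP; exists s.
case/(undirected_edge_sym und)/edgeP=> t tS; case: k {und} => /=; first by [].
- rewrite mul1g -(mulg_morph1 sigmaM) => /perm_inj/eqP.
  by rewrite -eq_invg_mul => /eqP def_t; rewrite -[sigma s]invgK def_t Ssym.
- rewrite invg1 mul1g -(mulg_morph1 sigmaM) => /perm_inj/eqP.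
  by rewrite -eq_invg_mul invgK => /eqP ->.
Qed.

Lemma nbr_shift_stable k : undirected sigma S k -> {homo nbr_shift k : s / s \in S}.
Proof.
move=> und s sS; have labelS := nbr_label_stable und.
case: k {und} labelS => /= labelS; [exact: Ssym | exact: labelS | exact/labelS/Ssym].
Qed.

Lemma card_le_bin_of_radius k D :
  undirected sigma S k -> (forall y, exists2 n, n <= D & walk sigma S k n 1 y) ->
  #|gT| <= 'C(D + #|S|, D).
Proof.
move=> und radius; apply: card_le_bin_of_short_products => // y.
have [n le_nD] := radius y.
case/(walk1_prod (nbr_shiftM k) (nbr_shift_stable und) (nbr_label_stable und)).
  exact: nbr_shiftE.
by move=> l lS [size_l ->]; exists l; rewrite ?size_l.
Qed.

End Graphs.

Section Diameter.
Local Open Scope ereal_scope.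
Variables (R : realType) (gT : finGroupType) (sigma : {perm gT}) (S : {set gT}).
Variables (k : graph_kind).

Lemma gdist_le_diameter x y : gdist sigma S k x y <= diameter sigma S k :> \bar R.
Proof. by apply: ereal_sup_ubound; exists x => //; exists y. Qed.

Lemma gdist_unreachable x y :
  (forall n, ~ walk sigma S k n x y) -> gdist sigma S k x y = +oo :> \bar R.
Proof.
move=> unreach; rewrite /gdist (_ : [set _ | n in _] = set0)%classic ?ereal_inf0 //.
by apply/seteqP; split=> // z [n /unreach].
Qed.

Lemma gdist_ge x y D : (forall n, walk sigma S k n x y -> (D <= n)%N) ->
  D%:R%:E <= gdist sigma S k x y :> \bar R.
Proof.
move=> walk_ge; apply/ereal_infP => _ [n /walk_ge le_Dn <-].
by rewrite lee_fin ler_nat.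
Qed.

Lemma diameter_ge_radius_bound x0 (r : \bar R) :
  (forall D, (forall y, exists2 n, (n <= D)%N & walk sigma S k n x0 y) ->
     r <= D%:R%:E) ->
  r <= diameter sigma S k.
Proof.
move=> r_le_radius.
have [conn|] := pselect (forall y, exists n, walk sigma S k n x0 y); last first.
  case/existsNP=> y /forallNP unreach; apply: le_trans (leey _) _.
  by rewrite -(gdist_unreachable unreach) gdist_le_diameter.
pose m y := ex_minn (conn y).
have m_walk y : walk sigma S k (m y) x0 y by rewrite /m; case: ex_minnP.
have m_min y n : walk sigma S k n x0 y -> (m y <= n)%N.
  by rewrite /m; case: ex_minnP => ? _; apply.
have [y0 max_m] : {y0 | \max_y m y = m y0}.
  by apply: bigop.eq_bigmax; apply/card_gt0P; exists x0.
apply: le_trans (r_le_radius (\max_y m y) _) _.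
  by move=> y; exists (m y); [apply: leq_bigmax | apply: m_walk].
rewrite max_m; apply: le_trans (gdist_le_diameter x0 y0).
exact/gdist_ge/m_min.
Qed.

End Diameter.

Section RadiusBound.
Local Open Scope ring_scope.
Variable R : realType.

Lemma bin_mul_fact_le D d : ('C(D + d, D) * d`! <= (D + d) ^ d)%N.
Proof.
rewrite -[X in 'C(_, X)](addnK d D) bin_sub ?leq_addl // bin_ffact ffact_prod.
rewrite -[X in (_ <= _ ^ X)%N]card_ord -prod_nat_const.
by apply: leq_prod => i _; apply: leq_subr.
Qed.

Lemma expn_le_expR_fact n : n%:R ^+ n <= expR 1 ^+ n * n`!%:R :> R.
Proof.
case: n => [|n]; first by rewrite !expr0 mul1r.
rewrite -ler_pdivrMr ?ltr0n ?fact_gt0 // -expRM_natl mulr1.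
by apply: le_trans (expR_ge1Dxn n (ler0n _ _)); rewrite lerDr.
Qed.

Lemma powR_root_le (x b : R) n :
  0 <= x -> 0 <= b -> x <= b ^+ n.+1 -> powR x n.+1%:R^-1 <= b.
Proof.
move=> x_ge0 b_ge0 le_xb; have -> : b = powR (b ^+ n.+1) n.+1%:R^-1.
  by rewrite -powR_mulrn // -powRrM mulfV ?powRr1.
by apply: ge0_ler_powR; rewrite // ?nnegrE ?exprn_ge0.
Qed.

Lemma root_bin_le N D d : (N <= 'C(D + d, D))%N ->
  d%:R * powR N%:R d%:R^-1 <= expR 1 * (D + d)%:R :> R.
Proof.
case: d => [|n] le_N_bin; first by rewrite mul0r mulr_ge0 ?expR_ge0.
set n1 := n.+1; pose b : R := expR 1 * (D + n1)%:R / n1%:R.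
have le_N_fact : (N * n1`! <= (D + n1) ^ n1)%N.
  exact: leq_trans (leq_mul le_N_bin (leqnn _)) (bin_mul_fact_le D n1).
have le_N_b : N%:R <= b ^+ n1.
  rewrite /b expr_div_n ler_pdivlMr ?exprn_gt0 ?ltr0n // exprMn.
  apply: le_trans (ler_wpM2l (ler0n _ N) (expn_le_expR_fact n1)) _.
  by rewrite mulrCA ler_wpM2l ?exprn_ge0 ?expR_ge0 // -natrX -natrM ler_nat.
have b_ge0 : 0 <= b by rewrite /b mulr_ge0 ?invr_ge0 ?expR_ge0.
apply: le_trans (ler_wpM2l (ler0n _ _) (powR_root_le (ler0n _ N) b_ge0 le_N_b)) _.
by rewrite /b mulrC divfK ?pnatr_eq0.
Qed.

Lemma radius_ge_root_bin N D d : (N <= 'C(D + d, D))%N ->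
  d%:R / (4 * expR 1) * powR N%:R d%:R^-1 - d%:R / 2 <= D%:R :> R.
Proof.
move=> /root_bin_le le_root.
have le_quarter : d%:R / (4 * expR 1) * powR N%:R d%:R^-1 <= (D + d)%:R / 4 :> R.
  rewrite mulrAC ler_pdivrMr ?mulr_gt0 ?expR_gt0 // mulrA divfK ?pnatr_eq0 //.
  by rewrite [_ * expR 1]mulrC.
have D_ge0 : 0 <= D%:R :> R by [].
have d_ge0 : 0 <= d%:R :> R by [].
rewrite natrD in le_quarter; lra.
Qed.

End RadiusBound.

Unset Implicit Arguments.

Theorem theorem9p1 (R : realType) (gT : finGroupType) (sigma : {perm gT})
  (S : {set gT}) (d : nat) (k : graph_kind) :
  abelian [set: gT] ->
  (4 <= #|gT|)%N ->
  sigma \in Aut [set: gT] -> #[sigma]%g = 2%N ->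
  (forall s, s \in S -> (s^-1)%g \in S) ->
  #|S| = d ->
  undirected sigma S k ->
  (((d%:R / (4 * expR 1)) * powR (#|gT|%:R) (d%:R^-1) - d%:R / 2)%:E
     <= @diameter gT sigma S R k)%E.
Proof.
move=> cTT _ sigma_aut _ Ssym <- und.
have sigmaM : {morph sigma : x y / (x * y)%g}.
  by move=> x y; apply: (morphicP (Aut_morphic sigma_aut)); rewrite inE.
apply: (diameter_ge_radius_bound (x0 := 1%g)) => D radius.
rewrite lee_fin; apply: radius_ge_root_bin.
by apply: (card_le_bin_of_radius cTT sigmaM Ssym und).
Qed.
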